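(* Let $(\mathcal V,\otimes,\lambda)$ be a colax Monoidal category and let $(C,\chi)$ be a homotopy coalgebra in $\mathcal V$. Then $(C,\chi)$ is the homotopy coalgebra associated with an ordinary (coassociative counital) coalgebra if and only if $C(I)=C(1)^{\otimes I}$ for all $I\in\mathbb N$ and $\chi^I_{n_1,\dots,n_I}=\lambda^{\sqcup_{i\in I}\mathbf n_i\to I}$ for all $I,n_1,\dots,n_I\in\mathbb N$, where $\sqcup_{i\in I}\mathbf n_i\to I$ is the non-decreasing map sending the $i$-th block $\mathbf n_i$ to $i$.
   Context: $\mathcal O_{sk}$ is the category with objects $\mathbf n=\{1<\dots<n\}$, $n\ge0$ (identified with $n\in\mathbb N$) and non-decreasing maps as morphisms; $\sqcup$ is ordered disjoint union. Composition is written in diagrammatic order. A colax Monoidal category $(\mathcal V,\otimes,\lambda)$ has tensor products $\otimes^{i\in I}X_i$ of finite ordered families and coherent structure morphisms $\lambda^\phi:\otimes^{j\in J}\otimes^{i\in\phi^{-1}j}X_i\to\otimes^{i\in I}X_i$ for $\phi:I\to J$ in $\mathcal O_{sk}$ (the opposite of a lax Monoidal structure on $\mathcal V^{op}$). A homotopy coalgebra $(C,\chi)$ is a lax Monoidal functor $(\mathcal O_{sk}^{op},\sqcup,\mathrm{id})\to(\mathcal V,\otimes,\lambda)$: objects $C(k)$, a functor $C:\mathcal O_{sk}^{op}\to\mathcal V$ (write $C(\phi^{op})$ for $\phi:I\to J$), morphisms $\chi^I_{N_1,\dots,N_I}:\otimes^{i\in I}C(N_i)\to C(\sqcup_iN_i)$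 natural in the $N_i$, with $\chi^{\mathbf1}_N=\mathrm{id}$ and, for every $\phi:I\to J$ and family $(N_i)_{i\in I}$, $(\otimes^{j\in J}\chi^{\phi^{-1}j})\chi^J=\lambda^\phi\chi^I$. An ordinary coalgebra is an object $C$ with $\Delta_I:C\to C^{\otimes I}$, $I\in\mathbb N$, $\Delta_{\mathbf1}=\mathrm{id}$, $\Delta_I=\Delta_J(\otimes^{j\in J}\Delta_{\phi^{-1}j})\lambda^\phi$ for all $\phi:I\to J$. Its associated homotopy coalgebra has $C(J)=C^{\otimes J}$, $C(\phi^{op})=(\otimes^{j\in J}\Delta_{\phi^{-1}j})\lambda^\phi$ and $\chi^I_{n_1,\dots,n_I}=\lambda^{\psi}$ where $\psi:\sqcup_{i\in I}\mathbf n_i\to I$ sends the $i$-th block to $i$. *)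

From HB Require Import structures.
From mathcomp Require Import all_boot all_order.
Set Implicit Arguments. Unset Strict Implicit. Unset Printing Implicit Defensive.
Import Order.TTheory.

Record omor (m n : nat) := OMap {
  omfun :> 'I_m -> 'I_n;
  omono : forall x y : 'I_m, (x <= y)%N -> (omfun x <= omfun y)%N }.

Lemma omor_id_mono m : forall x y : 'I_m, (x <= y)%N -> ((id x : 'I_m) <= id y)%N.
Proof. by []. Qed.
Definition omor_id m : omor m m := OMap (@omor_id_mono m).

Lemma omor_comp_mono m n p (f : omor m n) (g : omor n p) :
  forall x y : 'I_m, (x <= y)%N -> ((f \; g) x <= (f \; g) y)%N.
Proof. by move=> x y le; apply: omono; apply: omono. Qed.
Definition omor_comp m n p (f : omor m n) (g : omor n p) : omor m p :=
  OMap (omor_comp_mono f g).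

Lemma omor_to1_mono m : forall x y : 'I_m, (x <= y)%N ->
  (((fun _ => ord0) : 'I_m -> 'I_1) x <= ((fun _ => ord0) : 'I_m -> 'I_1) y)%N.
Proof. by []. Qed.
Definition omor_to1 m : omor m 1 := OMap (@omor_to1_mono m).

(* The preimage f^{-1} j as an ordered set, identified with 'I_#|fib f j|
   via the increasing enumeration fibval. *)
Definition fib m n (f : 'I_m -> 'I_n) (j : 'I_n) : {set 'I_m} := [set i | f i == j].
Definition fibval m n (f : 'I_m -> 'I_n) (j : 'I_n) (t : 'I_#|fib f j|) : 'I_m :=
  Order.enum_val t.

Lemma fibval_mono m n (f : 'I_m -> 'I_n) (j : 'I_n) (s t : 'I_#|fib f j|) :
  (s <= t)%N -> (fibval s <= fibval t)%N.
Proof.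
move=> le.
have := @Order.le_enum_val _ _ (@le_total _ 'I_m) (mem (fib f j)) s t.
by rewrite /fibval !leEord /= => ->.
Qed.

Lemma res_in m n p (f : omor m n) (g : omor n p) (k : 'I_p)
  (t : 'I_#|fib (omor_comp f g) k|) : f (fibval t) \in fib g k.
Proof.
have := Order.enum_valP t; rewrite !inE => H; exact: H.
Qed.

Definition res_fun m n p (f : omor m n) (g : omor n p) (k : 'I_p)
  (t : 'I_#|fib (omor_comp f g) k|) : 'I_#|fib g k| :=
  Order.enum_rank_in (res_in t) (f (fibval t)).


Lemma res_mono m n p (f : omor m n) (g : omor n p) (k : 'I_p) :
  forall x y : 'I_#|fib (omor_comp f g) k|, (x <= y)%N ->
    (res_fun x <= res_fun y)%N.
Proof.
move=> x y le.
have := @Order.le_enum_val _ _ (@le_total _ 'I_n) (mem (fib g k)) (res_fun x) (res_fun y).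
rewrite /res_fun !Order.enum_rankK_in ?res_in // !leEord /= => <-.
by apply: omono; apply: fibval_mono.
Qed.

Definition res m n p (f : omor m n) (g : omor n p) (k : 'I_p) :
  omor #|fib (omor_comp f g) k| #|fib g k| := OMap (@res_mono m n p f g k).

(* The object \sqcup_{i in I} N_i of O_sk is \sum_i N i; blk N i t is the
   t-th element of the i-th block. *)
Definition bsum I (N : 'I_I -> nat) : nat := \sum_(i < I) N i.

Lemma blk_subproof I (N : 'I_I -> nat) (i : 'I_I) (t : 'I_(N i)) :
  (\sum_(j < I | (j < i)%N) N j + t < bsum N)%N.
Proof.
rewrite /bsum [X in (_ < X)%N](bigID (fun j : 'I_I => (j < i)%N)) /= ltn_add2l.
rewrite (bigD1 i) ?ltnn //= ltn_addr //.
Qed.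

Definition blk I (N : 'I_I -> nat) (i : 'I_I) (t : 'I_(N i)) : 'I_(bsum N) :=
  Ordinal (blk_subproof t).

(* Composition is written in diagrammatic order. *)
Record colaxMonoidalCat := ColaxMonoidalCat {
  Ob : Type;
  Hom : Ob -> Ob -> Type;
  idm : forall a, Hom a a;
  comp : forall a b c, Hom a b -> Hom b c -> Hom a c;
  compA : forall a b c d (f : Hom a b) (g : Hom b c) (h : Hom c d),
    comp f (comp g h) = comp (comp f g) h;
  comp1m : forall a b (f : Hom a b), comp (idm a) f = f;
  compm1 : forall a b (f : Hom a b), comp f (idm b) = f;
  tens : forall n, ('I_n -> Ob) -> Ob;
  tensM : forall n (X Y : 'I_n -> Ob), (forall i, Hom (X i) (Y i)) ->
    Hom (tens X) (tens Y);
  tensM_id : forall n (X : 'I_n -> Ob), tensM (fun i => idm (X i)) = idm (tens X);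
  tensM_comp : forall n (X Y Z : 'I_n -> Ob)
    (f : forall i, Hom (X i) (Y i)) (g : forall i, Hom (Y i) (Z i)),
    tensM (fun i => comp (f i) (g i)) = comp (tensM f) (tensM g);
  tens1 : forall X : 'I_1 -> Ob, tens X = X ord0;
  tensM1 : forall (X Y : 'I_1 -> Ob) (f : forall i, Hom (X i) (Y i)),
    existT (fun p : Ob * Ob => Hom p.1 p.2) (tens X, tens Y) (tensM f) =
    existT (fun p : Ob * Ob => Hom p.1 p.2) (X ord0, Y ord0) (f ord0);
  lam : forall m n (phi : omor m n) (X : 'I_m -> Ob),
    Hom (tens (fun j : 'I_n => tens (fun t : 'I_#|fib phi j| => X (fibval t))))
        (tens X);
  lam_nat : forall m n (phi : omor m n) (X Y : 'I_m -> Ob)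
    (f : forall i, Hom (X i) (Y i)),
    comp (tensM (fun j : 'I_n => tensM (fun t : 'I_#|fib phi j| => f (fibval t))))
         (lam phi Y)
    = comp (lam phi X) (tensM f);
  lam_id : forall m (X : 'I_m -> Ob),
    existT (fun p : Ob * Ob => Hom p.1 p.2) (_, _) (lam (omor_id m) X) =
    existT (fun p : Ob * Ob => Hom p.1 p.2) (_, _) (idm (tens X));
  lam_to1 : forall m (X : 'I_m -> Ob),
    existT (fun p : Ob * Ob => Hom p.1 p.2) (_, _) (lam (omor_to1 m) X) =
    existT (fun p : Ob * Ob => Hom p.1 p.2) (_, _) (idm (tens X));
  lam_assoc : forall m n p (f : omor m n) (g : omor n p) (X : 'I_m -> Ob),
    existT (fun p : Ob * Ob => Hom p.1 p.2) (_, _)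
      (comp (tensM (fun k : 'I_p =>
               lam (res f g k)
                   (fun t : 'I_#|fib (omor_comp f g) k| => X (fibval t))))
            (lam (omor_comp f g) X)) =
    existT (fun p : Ob * Ob => Hom p.1 p.2) (_, _)
      (comp (lam g (fun j : 'I_n => tens (fun t : 'I_#|fib f j| => X (fibval t))))
            (lam f X))
}.

Arguments idm {V} a : rename.
Arguments comp {V a b c} f g : rename.
Arguments tens {V n} X : rename.
Arguments tensM {V n X Y} f : rename.
Arguments lam {V m n} phi X : rename.

(* A morphism together with its source and target; equality of such
   packages is equality of morphisms after identifying (equal) objects. *)
Definition arr (V : colaxMonoidalCat) (a b : Ob V) (f : Hom a b) :
  {p : Ob V * Ob V & Hom p.1 p.2} := existT (fun p : Ob V * Ob V => Hom p.1 p.2) (a, b) f.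

(* A lax Monoidal functor (O_sk^op, \sqcup, id) -> (V, tens, lam). *)
Record hcoalg (V : colaxMonoidalCat) := HCoalg {
  hC : nat -> Ob V;
  hCM : forall m n, omor m n -> Hom (hC n) (hC m);
  hCM_id : forall m, hCM (omor_id m) = idm (hC m);
  hCM_comp : forall m n p (f : omor m n) (g : omor n p),
    hCM (omor_comp f g) = comp (hCM g) (hCM f);
  chi : forall I (N : 'I_I -> nat),
    Hom (tens (fun i : 'I_I => hC (N i))) (hC (bsum N));
  (* chi is natural in the N_i; \sqcup_i phi_i is characterised blockwise *)
  chi_nat : forall I (M N : 'I_I -> nat) (phi : forall i, omor (M i) (N i))
    (Phi : omor (bsum M) (bsum N)),
    (forall i (t : 'I_(M i)), Phi (blk t) = blk (phi i t)) ->
    comp (tensM (fun i => hCM (phi i))) (chi M) = comp (chi N) (hCM Phi);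
  chi_one : forall N : 'I_1 -> nat, arr (chi N) = arr (idm (hC (N ord0)));
  chi_assoc : forall I J (phi : omor I J) (N : 'I_I -> nat),
    arr (comp (tensM (fun j : 'I_J =>
                 chi (fun t : 'I_#|fib phi j| => N (fibval t))))
              (chi (fun j : 'I_J => bsum (fun t : 'I_#|fib phi j| => N (fibval t)))))
    = arr (comp (lam phi (fun i => hC (N i))) (chi N))
}.

Record coalg (V : colaxMonoidalCat) := Coalg {
  cA : Ob V;
  cD : forall I, Hom cA (tens (fun _ : 'I_I => cA));
  cD_one : arr (cD 1) = arr (idm cA);
  cD_coassoc : forall I J (phi : omor I J),
    cD I = comp (comp (cD J) (tensM (fun j : 'I_J => cD #|fib phi j|)))
                (lam phi (fun _ : 'I_I => cA))
}.

Definition is_block_map I (N : 'I_I -> nat) (psi : omor (bsum N) I) : Prop :=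
  forall i (t : 'I_(N i)), psi (blk t) = i.

Definition associated_with (V : colaxMonoidalCat) (D : coalg V) (H : hcoalg V) : Prop :=
  [/\ forall J, hC H J = tens (fun _ : 'I_J => cA D),
      forall m n (phi : omor m n),
        arr (hCM H phi) =
        arr (comp (tensM (fun j : 'I_n => cD D #|fib phi j|))
                  (lam phi (fun _ : 'I_m => cA D)))
    & forall I (N : 'I_I -> nat) (psi : omor (bsum N) I), is_block_map psi ->
        arr (chi H N) = arr (lam psi (fun _ => cA D))].

(* Forwards, C(1) = A^{tens 1} = A.  Backwards, Delta_I is C applied to the
   unique map I -> 1, transported along C(I) = C(1)^{tens I}.  Every phi : I -> J
   factors through the block decomposition of I into its fibres, so naturality of
   chi in the blockwise map (phi^{-1} j -> 1)_j, together with chi = lambda on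
   block maps, gives C(phi^op) = (tens_j Delta_{phi^{-1} j}) lambda^phi.
   Functoriality of C at id_1 gives the counit law, at I -> J -> 1 coassociativity. *)
From Pilot Require Import Defs.
From mathcomp Require Import all_boot all_order.
From Stdlib Require Import Eqdep FunctionalExtensionality ProofIrrelevance.
From mathcomp Require Import zify.
Set Implicit Arguments. Unset Strict Implicit.

Section Arrows.
Variable V : colaxMonoidalCat.

Lemma arr_inj (a b : Ob V) (f g : Hom a b) : arr f = arr g -> f = g.
Proof. exact: Eqdep.EqdepTheory.inj_pairT2. Qed.

Lemma arr_comp (a b c a' b' c' : Ob V) (f : Hom a b) (g : Hom b c)
  (f' : Hom a' b') (g' : Hom b' c') :
  arr f = arr f' -> arr g = arr g' -> arr (Defs.comp f g) = arr (Defs.comp f' g').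
Proof.
move=> Ef Eg.
case: (f_equal (@projT1 _ _) Ef) => ea eb.
case: (f_equal (@projT1 _ _) Eg) => _ ec.
subst a' b' c'.
by rewrite (arr_inj Ef) (arr_inj Eg).
Qed.

Lemma arr_comp_idl (a b c x : Ob V) (f : Hom a b) (g : Hom b c) :
  arr f = arr (idm x) -> arr (Defs.comp f g) = arr g.
Proof.
move=> Ef; case: (f_equal (@projT1 _ _) Ef) => ea eb; subst x b.
by rewrite (arr_inj Ef) comp1m.
Qed.

Lemma arr_tensM n (X Y X' Y' : 'I_n -> Ob V) (f : forall i, Hom (X i) (Y i))
  (f' : forall i, Hom (X' i) (Y' i)) :
  (forall i, arr (f i) = arr (f' i)) -> arr (tensM f) = arr (tensM f').
Proof.
move=> E.
have eX : X = X'.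
  by apply: functional_extensionality => i; have := f_equal (fun p => (projT1 p).1) (E i).
have eY : Y = Y'.
  by apply: functional_extensionality => i; have := f_equal (fun p => (projT1 p).2) (E i).
subst X' Y'.
by rewrite (functional_extensionality_dep f f' (fun i => arr_inj (E i))).
Qed.

Lemma arr_eq_rect (a b b' : Ob V) (e : b = b') (f : Hom a b) :
  arr (eq_rect b (Hom a) f b' e) = arr f.
Proof. by case: b' / e. Qed.

End Arrows.

Lemma omor_ext m n (f g : omor m n) : (forall x, f x = g x) -> f = g.
Proof.
case: f => f fmono; case: g => g gmono /= E.
have ? := functional_extensionality _ _ E; subst g.
by rewrite (proof_irrelevance _ fmono gmono).
Qed.

Lemma arr_hCM_cast V (H : hcoalg V) m n m' n' (em : m = m') (en : n = n')
  (psi : omor m n) (phi : omor m' n') :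
  (forall x, val (psi x) = val (phi (cast_ord em x))) ->
  arr (hCM H psi) = arr (hCM H phi).
Proof.
subst m' n' => E; suff -> : psi = phi by [].
by apply: omor_ext => x; apply: val_inj; rewrite E cast_ord_id.
Qed.

Lemma arr_lam_cast V m m' n (em : m = m') (psi : omor m n) (phi : omor m' n) (A : Ob V) :
  (forall x, val (psi x) = val (phi (cast_ord em x))) ->
  arr (lam psi (fun _ => A)) = arr (lam phi (fun _ => A)).
Proof.
subst m' => E; suff -> : psi = phi by [].
by apply: omor_ext => x; apply: val_inj; rewrite E cast_ord_id.
Qed.

Lemma card_ord_lt m (x : nat) : (x <= m)%N -> #|[set y : 'I_m | (y < x)%N]| = x.
Proof.
move=> le_xm.
have := @big_ord_widen_cond nat 0 addn x m xpredT (fun _ => 1) le_xm.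
rewrite /= sum1_card card_ord => E.
by rewrite [RHS]E -sum1_card; apply: eq_bigl => y; rewrite inE.
Qed.

Lemma bsum1 n : bsum (fun _ : 'I_n => 1) = n.
Proof. by rewrite /bsum sum1_card card_ord. Qed.

Lemma blk1 n (j : 'I_n) (t : 'I_1) : val (@blk n (fun _ => 1) j t) = j.
Proof.
rewrite /= (ord1 t) addn0 sum1_card -[RHS](@card_ord_lt n j (ltnW (ltn_ord j))).
by apply: eq_card => y; rewrite !inE.
Qed.

Section Fibres.
Variables (m n : nat) (phi : omor m n).

(* The fibre phi^{-1} j occupies the positions [fib_start j, fib_start j.+1) of 'I_m. *)
Definition fib_start (j : nat) : nat := #|[set y : 'I_m | (phi y < j)%N]|.

Lemma fib_start_mono j1 j2 : (j1 <= j2)%N -> (fib_start j1 <= fib_start j2)%N.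
Proof.
move=> le_j; apply: subset_leq_card; apply/subsetP => y; rewrite !inE => lt_y.
exact: leq_trans lt_y le_j.
Qed.

Lemma fib_start_le (x : 'I_m) : (fib_start (phi x) <= x)%N.
Proof.
rewrite -[X in (_ <= X)%N](@card_ord_lt m x (ltnW (ltn_ord x))).
apply: subset_leq_card; apply/subsetP => y; rewrite !inE => lt_y.
by rewrite ltnNge; apply/negP => /(omono phi); rewrite leqNgt lt_y.
Qed.

Lemma lt_fib_start (x : 'I_m) : (x < fib_start (phi x).+1)%N.
Proof.
rewrite -[X in (X <= _)%N](@card_ord_lt m x.+1 (ltn_ord x)).
apply: subset_leq_card; apply/subsetP => y; rewrite !inE ltnS.
exact: omono.
Qed.

Lemma fib_startS (j : 'I_n) : fib_start j.+1 = fib_start j + #|fib phi j|.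
Proof.
rewrite /fib_start -(cardID [set y : 'I_m | (phi y < j)%N] [set y : 'I_m | (phi y < j.+1)%N]).
congr (_ + _); apply: eq_card => y; rewrite !inE.
  by apply/andP/idP => [[] //|lt_y]; split=> //; apply: ltnW.
by rewrite -val_eqE /=; apply/idP/idP => h; lia.
Qed.

Lemma sum_card_fib_lt (j : nat) :
  \sum_(k < n | (k < j)%N) #|fib phi k| = fib_start j.
Proof.
rewrite /fib_start -sum1_card (partition_big phi (fun k : 'I_n => (k < j)%N)) /=; last first.
  by move=> y; rewrite inE.
apply: eq_bigr => k lt_kj; rewrite sum1_card; apply: eq_card => y.
rewrite !inE /in_mem /=.
change ((phi y == k) = (y \in [set y0 | (phi y0 < j)%N]) && (phi y == k)).
by rewrite inE; case: eqP => [->|]; rewrite ?andbT ?andbF ?lt_kj.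
Qed.

Lemma bsum_card_fib : bsum (fun k : 'I_n => #|fib phi k|) = m.
Proof.
rewrite /bsum (eq_bigl (fun k : 'I_n => (k < n)%N)); last by move=> k; rewrite ltn_ord.
rewrite sum_card_fib_lt /fib_start -[RHS](card_ord m).
by apply: eq_card => y; rewrite !inE ltn_ord.
Qed.

Lemma fib_start_offset (j : 'I_n) (t : nat) (y : 'I_m) :
  (t < #|fib phi j|)%N -> val y = fib_start j + t -> phi y = j.
Proof.
move=> lt_t def_y; apply: val_inj => /=.
have le_y := fib_start_le y; have lt_y := lt_fib_start y; have startS := fib_startS j.
by case: (ltngtP (phi y) j) => // c; have := fib_start_mono c; simpl in *; lia.
Qed.

End Fibres.

Section BlockDecomposition.
Variables (m n : nat) (phi : omor m n).
Let M (j : 'I_n) : nat := #|fib phi j|.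
Let eM : bsum M = m := bsum_card_fib phi.
Let e1 : bsum (fun _ : 'I_n => 1) = n := bsum1 n.

Lemma phi_blk_fib (j : 'I_n) (t : 'I_(M j)) : phi (cast_ord eM (blk t)) = j.
Proof. by apply: (fib_start_offset (ltn_ord t)); rewrite /= -sum_card_fib_lt. Qed.

Lemma fib_block_mono : forall x y : 'I_(bsum M), (x <= y)%N ->
  (phi (cast_ord eM x) <= phi (cast_ord eM y))%N.
Proof. by move=> x y le_xy; apply: omono. Qed.
Definition fib_block_map : omor (bsum M) n := OMap fib_block_mono.

Lemma unit_block_mono : forall x y : 'I_(bsum (fun _ : 'I_n => 1)), (x <= y)%N ->
  (cast_ord e1 x <= cast_ord e1 y)%N.
Proof. by []. Qed.
Definition unit_block_map : omor (bsum (fun _ : 'I_n => 1)) n := OMap unit_block_mono.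

Lemma collapse_mono : forall x y : 'I_(bsum M), (x <= y)%N ->
  (cast_ord (esym e1) (phi (cast_ord eM x)) <= cast_ord (esym e1) (phi (cast_ord eM y)))%N.
Proof. by move=> x y le_xy; apply: omono. Qed.
Definition collapse_blocks : omor (bsum M) (bsum (fun _ : 'I_n => 1)) :=
  OMap collapse_mono.

Lemma fib_block_mapP : is_block_map fib_block_map.
Proof. exact: phi_blk_fib. Qed.

Lemma unit_block_mapP : is_block_map unit_block_map.
Proof. by move=> j t; apply: val_inj; exact: blk1. Qed.

Lemma collapse_blocksE (j : 'I_n) (t : 'I_(M j)) :
  collapse_blocks (blk t) = @blk n (fun _ => 1) j (omor_to1 (M j) t).
Proof. by apply: val_inj; rewrite (blk1 (n := n)) /= phi_blk_fib. Qed.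

End BlockDecomposition.

Section Reconstruction.
Variables (V : colaxMonoidalCat) (H : hcoalg V).
Hypothesis hC_tens : forall I : nat, hC H I = tens (fun _ : 'I_I => hC H 1).
Hypothesis chi_block : forall (I : nat) (N : 'I_I -> nat) (psi : omor (bsum N) I),
  is_block_map psi -> arr (chi H N) = arr (lam psi (fun _ => hC H 1)).

Definition comult I : Hom (hC H 1) (tens (fun _ : 'I_I => hC H 1)) :=
  eq_rect (hC H I) (Hom (hC H 1)) (hCM H (omor_to1 I)) _ (hC_tens I).

Lemma arr_comult I : arr (comult I) = arr (hCM H (omor_to1 I)).
Proof. exact: arr_eq_rect. Qed.

Lemma hCM_fibrewise m n (phi : omor m n) :
  arr (hCM H phi) =
  arr (Defs.comp (tensM (fun j : 'I_n => comult #|fib phi j|))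
                 (lam phi (fun _ : 'I_m => hC H 1))).
Proof.
pose M (j : 'I_n) := #|fib phi j|.
have chi_nat_collapse := @chi_nat V H n M (fun _ => 1) (fun j => omor_to1 (M j))
  (collapse_blocks phi) (collapse_blocksE (phi := phi)).
have chi_units_id : arr (chi H (fun _ : 'I_n => 1)) = arr (idm (tens (fun _ : 'I_n => hC H 1))).
  rewrite (chi_block (unit_block_mapP (n := n))).
  by rewrite (arr_lam_cast (em := bsum1 n) (phi := omor_id n)) //; apply: lam_id.
rewrite -(arr_hCM_cast H (bsum1 n) (em := bsum_card_fib phi) (psi := collapse_blocks phi)) //.
rewrite -(arr_comp_idl (hCM H (collapse_blocks phi)) chi_units_id) -chi_nat_collapse.
apply: arr_comp; first by apply: arr_tensM => j; rewrite arr_comult.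
rewrite (chi_block (fib_block_mapP (phi := phi))).
exact: (arr_lam_cast (em := bsum_card_fib phi)).
Qed.

Lemma comult_counit : arr (comult 1) = arr (idm (hC H 1)).
Proof.
rewrite arr_comult.
have -> : omor_to1 1 = omor_id 1 by apply: omor_ext => x; rewrite !ord1.
by rewrite hCM_id.
Qed.

Lemma comult_coassoc I J (phi : omor I J) :
  comult I = Defs.comp (Defs.comp (comult J) (tensM (fun j : 'I_J => comult #|fib phi j|)))
                       (lam phi (fun _ : 'I_I => hC H 1)).
Proof.
apply: arr_inj; rewrite -Defs.compA arr_comult.
have -> : omor_to1 I = omor_comp phi (omor_to1 J) by apply: omor_ext.
rewrite hCM_comp; apply: arr_comp; first by rewrite arr_comult.
exact: hCM_fibrewise.
Qed.

Definition underlying_coalg : coalg V := Coalg comult_counit comult_coassoc.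

Lemma associated_with_underlying : associated_with underlying_coalg H.
Proof. by split=> //; apply: hCM_fibrewise. Qed.

End Reconstruction.

Theorem mainTheorem2 (V : colaxMonoidalCat) (H : hcoalg V) :
  (exists D : coalg V, associated_with D H) <->
  ((forall I : nat, hC H I = tens (fun _ : 'I_I => hC H 1)) /\
   (forall (I : nat) (N : 'I_I -> nat) (psi : omor (bsum N) I),
      is_block_map psi ->
      arr (chi H N) = arr (lam psi (fun _ => hC H 1)))).
Proof.
split=> [[D [hC_tens _ chi_block]] | [hC_tens chi_block]]; last first.
  by exists (underlying_coalg hC_tens chi_block); apply: associated_with_underlying.
have hC1 : hC H 1 = cA D by rewrite hC_tens tens1.
by rewrite hC1; split.
Qed.
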